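(* For every integer $m \geq 0$ and every real $\eta > -1$, $$ \pi = \frac{4^{m+1}}{\binom{2m}{m}(2m+1)}\cdot \frac{ {}_{3}F_{2}\!\!\left[ \begin{matrix} \tfrac{1}{2}-m,1,-\eta \\ \tfrac{3}{2}+m,2+\eta \end{matrix} \ \Bigg| \ -1 \right]}{ {}_{3}F_{2}\!\!\left[ \begin{matrix} \tfrac{1}{2}-m,\tfrac{1}{2},1+\eta \\ 1,2+\eta \end{matrix} \ \Bigg| \ 1 \right]}.$$
   Context: ${}_pF_q\left[\begin{matrix} a_1,\dots,a_p\\ b_1,\dots,b_q\end{matrix}\,\Big|\, z\right] = \sum_{n\ge 0} \frac{(a_1)_n\cdots(a_p)_n}{(b_1)_n\cdots(b_q)_n}\frac{z^n}{n!}$ with $(x)_n = \Gamma(x+n)/\Gamma(x)$. *)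

From Stdlib Require Import Reals List Arith Factorial.
From Coquelicot Require Import Coquelicot.
Import ListNotations.
Open Scope R_scope.

Fixpoint poch (x : R) (n : nat) : R :=
  match n with
  | O => 1
  | S k => poch x k * (x + INR k)
  end.

Definition poch_prod (l : list R) (n : nat) : R :=
  fold_right (fun x acc => poch x n * acc) 1 l.

Definition hyp_term (a b : list R) (z : R) (n : nat) : R :=
  poch_prod a n / poch_prod b n * z ^ n / INR (Factorial.fact n).

Definition is_pFq (a b : list R) (z v : R) : Prop :=
  is_series (hyp_term a b z) v.

From Stdlib Require Import Reals Lra Lia Arith List Factorial.
From Coquelicot Require Import Coquelicot.
Import ListNotations.
Open Scope R_scope.

(* The numerator series is [Σ_j num_coef m j * num_weight η j], where
   [num_weight x j = x (x-1) ... (x-j+1) / ((x+2) ... (x+j+1))], and the denominator series is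
   [Σ_n den_coef m n * den_weight η n] with [den_weight x n = (1+x) / (n+1+x)].
   The lower-triangular matrix [conn n j = (2j+1) n!^2 / ((n-j)! (n+j+1)!)] is nonnegative, has
   row sums 1 and maps [(num_weight x j)_j] to [(den_weight x n)_n]; both facts follow by
   creative telescoping. For [m >= 1] the [den_coef m n] are absolutely summable, so the two
   summations can be exchanged: the denominator series equals [Σ_j col m j * num_weight η j] with
   column sums [col m j = Σ_n den_coef m n * conn n j], and a telescoping in [n] gives
   [col m j = col m 0 * num_coef m j]. Hence the numerator is the denominator divided by [col m 0].
   At [x = -1] the weights become [(-1)^j] and the matrix sends them to [(1, 0, 0, ...)], so
   [1 / col m 0 = Σ_j (-1)^j num_coef m j]; a contiguous relation in [m] reduces this to Leibniz's
   series [π/4 = Σ_j (-1)^j / (2j+1)] and yields [kappa m = π C(2m,m) (2m+1) / 4^(m+1)].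
   The case [m = 0], where [Σ den_coef 0 n] diverges, and the positivity of the denominator series
   follow from contiguous relations between [m] and [m+1]. *)

(** * Telescoping and interchange of summation *)

Lemma is_series_sum_f_R0 (a : nat -> R) (l : R) :
  is_series a l <-> is_lim_seq (fun N => sum_f_R0 a N) l.
Proof.
  split; intro H.
  - apply (is_lim_seq_ext (sum_n a)); [intro; apply sum_n_Reals | exact H].
  - apply (is_lim_seq_ext _ (sum_n a)) in H; [exact H | intro; symmetry; apply sum_n_Reals].
Qed.

Lemma sum_f_R0_telescope (g : nat -> R) (N : nat) :
  sum_f_R0 (fun j => g (S j) - g j) N = g (S N) - g O.
Proof. induction N as [|N IH]; simpl; [ring | rewrite IH; ring]. Qed.

Lemma sum_f_R0_mono (f : nat -> R) (N M : nat) :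
  (forall k, 0 <= f k) -> (N <= M)%nat -> sum_f_R0 f N <= sum_f_R0 f M.
Proof.
  intros Hf H; induction H as [|M _ IH]; [lra|].
  rewrite tech5; specialize (Hf (S M)); lra.
Qed.

Lemma sum_f_R0_trunc (f : nat -> R) (n N : nat) :
  (forall k, (n < k)%nat -> f k = 0) -> (n <= N)%nat -> sum_f_R0 f N = sum_f_R0 f n.
Proof.
  intros Hf H; induction H as [|N HN IH]; [reflexivity|].
  rewrite tech5, IH, Hf by lia; ring.
Qed.

Lemma is_series_telescope (a g : nat -> R) (l : R) :
  (forall n, a n = g (S n) - g n) -> is_lim_seq g l -> is_series a (l - g O).
Proof.
  intros Ha Hg; apply is_series_sum_f_R0.
  apply (is_lim_seq_ext (fun N => g (S N) - g O)).
  - intro N; rewrite <- sum_f_R0_telescope; apply sum_eq; intros; symmetry; apply Ha.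
  - apply is_lim_seq_minus'; [now apply is_lim_seq_incr_1 in Hg | apply is_lim_seq_const].
Qed.

Lemma is_series_scal_telescope (a b g : nat -> R) (k B : R) :
  (forall n, a n = k * b n + (g (S n) - g n)) -> is_series b B -> is_lim_seq g 0 ->
  is_series a (k * B - g O).
Proof.
  intros Ha Hb Hg.
  replace (k * B - g O) with (k * B + (0 - g O)) by ring.
  apply (is_series_ext (fun n => k * b n + (g (S n) - g n))); [intro; symmetry; apply Ha|].
  apply (is_series_plus (fun n => k * b n)).
  - now apply (is_series_scal_l k b).
  - now apply is_series_telescope.
Qed.

Lemma is_series_pos (a : nat -> R) (l : R) :
  (forall n, 0 <= a n) -> 0 < a O -> is_series a l -> 0 < l.
Proof.
  intros Ha Ha0 Hl; apply is_series_sum_f_R0 in Hl.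
  assert (H : Rbar_le (a O) l).
  { apply (is_lim_seq_le (fun _ => a O) (fun N => sum_f_R0 a N));
      [|apply is_lim_seq_const | exact Hl].
    intro N; rewrite <- (sum_f_R0_mono a 0 N) by (auto; lia); simpl; lra. }
  simpl in H; lra.
Qed.

Lemma is_lim_seq_0_of_inv_bound (u : nat -> R) (C : R) (n0 : nat) :
  (forall n, (n0 <= n)%nat -> Rabs (u n) <= C / (INR n + 1)) -> is_lim_seq u 0.
Proof.
  intro H; apply is_lim_seq_abs_0.
  apply (is_lim_seq_le_le_loc (fun _ => 0) _ (fun n => C * / (INR n + 1))).
  - exists n0; intros n Hn; split; [apply Rabs_pos | apply H, Hn].
  - apply is_lim_seq_const.
  - replace (Finite 0) with (Rbar_mult C (Rbar_inv p_infty)) by (simpl; f_equal; ring).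
    apply is_lim_seq_scal_l, is_lim_seq_inv; [|discriminate].
    apply (is_lim_seq_ext (fun n => INR (S n))); [intro; apply S_INR|].
    apply (is_lim_seq_incr_1 INR), is_lim_seq_INR.
Qed.

Lemma nonincreasing_bound (f : nat -> R) (m : nat) :
  (forall n, (m <= n)%nat -> f (S n) <= f n) -> forall n, (m <= n)%nat -> f n <= f m.
Proof. intros H n Hn; induction Hn as [|n Hn IH]; [lra | specialize (H n Hn); lra]. Qed.

Lemma ex_series_inv_sq : ex_series (fun k => / (INR k + 1) ^ 2).
Proof.
  apply (ex_series_le (fun k => / (INR k + 1) ^ 2) (fun k => 2 / (INR k + 1) - 2 / (INR k + 2))).
  - intro k; change (norm (/ (INR k + 1) ^ 2)) with (Rabs (/ (INR k + 1) ^ 2)).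
    pose proof (pos_INR k).
    rewrite Rabs_pos_eq by (apply Rlt_le, Rinv_0_lt_compat, pow_lt; lra).
    apply (Rmult_le_reg_r ((INR k + 1) ^ 2 * (INR k + 2))); [apply Rmult_lt_0_compat; nra|].
    field_simplify; nra.
  - exists (0 - - (2 / (INR 0 + 1))).
    apply (is_series_telescope _ (fun k => - (2 / (INR k + 1)))).
    + intro k; rewrite S_INR; field; pose proof (pos_INR k); lra.
    + apply (is_lim_seq_0_of_inv_bound _ 2 0); intros n _; pose proof (pos_INR n).
      rewrite Rabs_Ropp, Rabs_pos_eq; [lra|].
      apply Rlt_le, Rdiv_lt_0_compat; lra.
Qed.

Lemma is_lim_seq_Series_truncation (f : nat -> nat -> R) (b : nat -> R) :
  ex_series b -> (forall N n, Rabs (f N n) <= b n) ->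
  (forall N n, (n <= N)%nat -> f N n = f n n) ->
  is_lim_seq (fun N => Series (f N)) (Series (fun n => f n n)).
Proof.
  intros Hb Hfb Hdiag.
  set (d := fun n => f n n).
  set (e := fun N => 2 * (Series b - sum_f_R0 b N)).
  assert (Hd : ex_series d) by (apply (ex_series_le d b); [intro; apply Hfb | exact Hb]).
  assert (Hdiff : forall N n, Rabs (f N n - d n) <= 2 * b n).
  { intros N n; unfold d; eapply Rle_trans; [apply Rabs_triang|].
    rewrite Rabs_Ropp; pose proof (Hfb N n); pose proof (Hfb n n); lra. }
  assert (H2b : ex_series (fun n => 2 * b n)) by now apply (ex_series_scal_l 2 b).
  assert (He : is_lim_seq e 0).
  { replace (Finite 0) with (Rbar_mult 2 (Series b - Series b)) by (simpl; f_equal; ring).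
    apply is_lim_seq_scal_l, is_lim_seq_minus'; [apply is_lim_seq_const|].
    now apply is_series_sum_f_R0, Series_correct. }
  (* [f N] and [d] agree below [N], so their sums differ by at most the tail [2 Σ_(n>N) b n]. *)
  assert (Hbound : forall N, Rabs (Series (f N) - Series d) <= e N).
  { intro N.
    assert (HfN : ex_series (f N)) by (apply (ex_series_le (f N) b); [intro; apply Hfb | exact Hb]).
    assert (Habs : ex_series (fun n => Rabs (f N n - d n))).
    { apply (ex_series_le (fun n => Rabs (f N n - d n)) (fun n => 2 * b n)); [|exact H2b].
      intro n; apply Rle_trans with (2 := Hdiff N n), Req_le, Rabs_Rabsolu. }
    rewrite <- Series_minus by assumption.
    eapply Rle_trans; [apply Series_Rabs, Habs|].
    rewrite (Series_incr_n _ (S N)) by (auto; lia).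
    rewrite sum_eq_R0, Rplus_0_l.
    2: { intros n Hn; unfold d; rewrite Hdiag, Rminus_diag, Rabs_R0 by lia; reflexivity. }
    unfold e; rewrite (Series_incr_n b (S N)) by (auto; lia); simpl pred.
    replace (2 * (sum_f_R0 b N + Series (fun k => b (S N + k)%nat) - sum_f_R0 b N))
      with (Series (fun k => 2 * b (S N + k)%nat)) by (rewrite Series_scal_l; ring).
    apply Series_le; [|now apply (ex_series_incr_n (fun n => 2 * b n))].
    intro k; split; [apply Rabs_pos | apply Hdiff]. }
  apply (is_lim_seq_le_le (fun N => Series d - e N) _ (fun N => Series d + e N)).
  - intro N; specialize (Hbound N); apply Rabs_le_between' in Hbound; lra.
  - replace (Finite (Series d)) with (Finite (Series d - 0)) by (f_equal; ring).
    apply is_lim_seq_minus'; [apply is_lim_seq_const | exact He].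
  - replace (Finite (Series d)) with (Finite (Series d + 0)) by (f_equal; ring).
    apply is_lim_seq_plus'; [apply is_lim_seq_const | exact He].
Qed.

Section Interchange.

Variables (c : nat -> R) (L : nat -> nat -> R).
Hypothesis c_abs : ex_series (fun n => Rabs (c n)).
Hypothesis L_ge0 : forall n j, 0 <= L n j.
Hypothesis L_eq0 : forall n j, (n < j)%nat -> L n j = 0.
Hypothesis L_row : forall n, sum_f_R0 (L n) n = 1.

Lemma partial_row_sum_le1 (n N : nat) : sum_f_R0 (L n) N <= 1.
Proof.
  rewrite <- (L_row n), <- (sum_f_R0_trunc (L n) n (max N n)) by (auto; lia).
  apply sum_f_R0_mono; auto; lia.
Qed.

Lemma entry_le1 (n j : nat) : L n j <= 1.
Proof.
  eapply Rle_trans; [|apply (partial_row_sum_le1 n j)].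
  destruct j as [|j]; simpl; [lra|].
  pose proof (cond_pos_sum (L n) j (L_ge0 n)); lra.
Qed.

Lemma ex_series_column (j : nat) : ex_series (fun n => c n * L n j).
Proof.
  apply (ex_series_le (fun n => c n * L n j) (fun n => Rabs (c n))); [|exact c_abs].
  intro n; change (norm (c n * L n j)) with (Rabs (c n * L n j)).
  rewrite Rabs_mult, (Rabs_pos_eq (L n j)) by auto.
  pose proof (entry_le1 n j); pose proof (Rabs_pos (c n)); nra.
Qed.

Variable w : nat -> R.
Hypothesis w_bound : forall j, Rabs (w j) <= 1.

Lemma series_interchange : exists S : R,
  is_series (fun n => c n * sum_f_R0 (fun j => L n j * w j) n) S /\
  is_series (fun j => Series (fun n => c n * L n j) * w j) S.
Proof.
  set (f := fun N n => c n * sum_f_R0 (fun j => L n j * w j) N).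
  assert (Hf : forall N n, Rabs (f N n) <= Rabs (c n)).
  { intros N n; unfold f; rewrite Rabs_mult.
    assert (Rabs (sum_f_R0 (fun j => L n j * w j) N) <= 1).
    { eapply Rle_trans; [apply Rsum_abs|].
      eapply Rle_trans; [|apply (partial_row_sum_le1 n N)].
      apply sum_growing; intro j.
      rewrite Rabs_mult, (Rabs_pos_eq (L n j)) by auto.
      pose proof (w_bound j); pose proof (L_ge0 n j); nra. }
    pose proof (Rabs_pos (c n)); nra. }
  assert (Hdiag : forall N n, (n <= N)%nat -> f N n = f n n).
  { intros N n Hn; unfold f; f_equal.
    apply sum_f_R0_trunc; [intros; rewrite L_eq0 by lia; ring | exact Hn]. }
  assert (Hrows : forall N, is_series (f N)
                    (sum_f_R0 (fun j => Series (fun n => c n * L n j) * w j) N)).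
  { intro N; induction N as [|N IH]; unfold f; simpl.
    - apply (is_series_ext (fun n => c n * L n O * w O)); [intro; simpl; ring|].
      apply is_series_scal_r, Series_correct, ex_series_column.
    - apply (is_series_ext (fun n => f N n + c n * L n (S N) * w (S N)));
        [intro n; unfold f; simpl; ring|].
      apply (is_series_plus (f N)); [exact IH|].
      apply is_series_scal_r, Series_correct, ex_series_column. }
  exists (Series (fun n => f n n)); split.
  - apply Series_correct, (ex_series_le (fun n => f n n) (fun n => Rabs (c n))); auto.
  - apply is_series_sum_f_R0.
    apply (is_lim_seq_ext (fun N => Series (f N))).
    + intro N; apply is_series_unique, Hrows.
    + apply (is_lim_seq_Series_truncation f (fun n => Rabs (c n))); auto.
Qed.

End Interchange.

(** * The hypergeometric terms *)

Lemma poch_1 (n : nat) : poch 1 n = INR (fact n).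
Proof.
  induction n as [|n IH]; [reflexivity|].
  simpl poch; rewrite IH, fact_simpl, mult_INR, S_INR; ring.
Qed.

Lemma poch_pos (x : R) (n : nat) : 0 < x -> 0 < poch x n.
Proof.
  intro Hx; induction n as [|n IH]; simpl; [lra|].
  pose proof (pos_INR n); apply Rmult_lt_0_compat; lra.
Qed.

Lemma poch_shift (a : R) (n : nat) : poch a n * (a + INR n) = a * poch (a + 1) n.
Proof.
  induction n as [|n IH]; [simpl; ring|].
  simpl poch; rewrite S_INR.
  replace (poch a n * (a + INR n) * (a + (INR n + 1)))
    with (poch a n * (a + INR n) * (a + 1 + INR n)) by ring.
  rewrite IH; ring.
Qed.

Definition num_coef (m j : nat) : R := poch (1/2 - INR m) j / poch (3/2 + INR m) j.
Definition num_weight (x : R) (j : nat) : R := poch (- x) j * (-1) ^ j / poch (2 + x) j.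
Definition den_coef (m n : nat) : R := poch (1/2 - INR m) n * poch (1/2) n / INR (fact n) ^ 2.
Definition den_weight (x : R) (n : nat) : R := (1 + x) / (INR n + 1 + x).

Lemma hyp_term_num (m : nat) (x : R) (j : nat) : -1 < x ->
  hyp_term [1/2 - INR m; 1; - x] [3/2 + INR m; 2 + x] (-1) j = num_coef m j * num_weight x j.
Proof.
  intro Hx; unfold hyp_term, poch_prod, num_coef, num_weight; simpl.
  rewrite poch_1.
  pose proof (INR_fact_lt_0 j); pose proof (poch_pos (2 + x) j ltac:(lra)).
  pose proof (poch_pos (3/2 + INR m) j ltac:(pose proof (pos_INR m); lra)).
  field; repeat split; lra.
Qed.

Lemma hyp_term_den (m : nat) (x : R) (n : nat) : -1 < x ->
  hyp_term [1/2 - INR m; 1/2; 1 + x] [1; 2 + x] 1 n = den_coef m n * den_weight x n.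
Proof.
  intro Hx; unfold hyp_term, poch_prod, den_coef, den_weight; simpl.
  rewrite pow1, poch_1.
  pose proof (INR_fact_lt_0 n); pose proof (poch_pos (2 + x) n ltac:(lra)); pose proof (pos_INR n).
  pose proof (poch_shift (1 + x) n) as Hshift.
  replace (1 + x + 1) with (2 + x) in Hshift by ring.
  replace (poch (1 + x) n) with ((1 + x) * poch (2 + x) n / (INR n + 1 + x))
    by (rewrite <- Hshift; field; lra).
  field; repeat split; lra.
Qed.

Lemma num_weight_0 (x : R) : num_weight x 0 = 1.
Proof. unfold num_weight; simpl; field. Qed.

Lemma num_weight_S (x : R) (j : nat) : -1 <= x ->
  num_weight x (S j) = num_weight x j * (x - INR j) / (x + 2 + INR j).
Proof.
  intro Hx; unfold num_weight; simpl poch; simpl pow.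
  pose proof (poch_pos (2 + x) j ltac:(lra)); pose proof (pos_INR j).
  field; lra.
Qed.

Lemma num_weight_bound (x : R) (j : nat) : -1 <= x -> Rabs (num_weight x j) <= 1.
Proof.
  intro Hx; induction j as [|j IH].
  - rewrite num_weight_0, Rabs_R1; lra.
  - rewrite num_weight_S by exact Hx; pose proof (pos_INR j).
    unfold Rdiv; rewrite !Rabs_mult, Rabs_inv, (Rabs_pos_eq (x + 2 + INR j)) by lra.
    assert (Rabs (x - INR j) <= x + 2 + INR j) by (apply Rabs_le; lra).
    assert (Rabs (x - INR j) * / (x + 2 + INR j) <= 1).
    { apply (Rmult_le_reg_r (x + 2 + INR j)); [lra|].
      rewrite Rmult_assoc, Rinv_l by lra; lra. }
    pose proof (Rabs_pos (num_weight x j)); pose proof (Rabs_pos (x - INR j)).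
    assert (0 <= / (x + 2 + INR j)) by (apply Rlt_le, Rinv_0_lt_compat; lra).
    nra.
Qed.

Lemma num_weight_m1 (j : nat) : num_weight (-1) j = (-1) ^ j.
Proof.
  induction j as [|j IH]; [apply num_weight_0|].
  rewrite num_weight_S, IH by lra; simpl.
  pose proof (pos_INR j); field; lra.
Qed.

Lemma num_coef_0 (m : nat) : num_coef m 0 = 1.
Proof. unfold num_coef; simpl; field. Qed.

Lemma num_coef_S (m j : nat) :
  num_coef m (S j) = num_coef m j * (INR j + 1/2 - INR m) / (INR j + 3/2 + INR m).
Proof.
  unfold num_coef; simpl poch.
  pose proof (poch_pos (3/2 + INR m) j ltac:(pose proof (pos_INR m); lra)).
  pose proof (pos_INR j); pose proof (pos_INR m).
  field; lra.
Qed.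

Lemma num_coef_0_eq (j : nat) : num_coef 0 j = / (2 * INR j + 1).
Proof.
  induction j as [|j IH]; [rewrite num_coef_0; simpl; field|].
  rewrite num_coef_S, IH, S_INR; simpl INR; pose proof (pos_INR j).
  field; lra.
Qed.

Lemma den_coef_0 (m : nat) : den_coef m 0 = 1.
Proof. unfold den_coef; simpl; field. Qed.

Lemma den_coef_S (m n : nat) :
  den_coef m (S n) = den_coef m n * (INR n + 1/2 - INR m) * (INR n + 1/2) / (INR n + 1) ^ 2.
Proof.
  unfold den_coef; simpl poch; rewrite fact_simpl, mult_INR, S_INR.
  pose proof (INR_fact_lt_0 n); pose proof (pos_INR n).
  field; lra.
Qed.

Lemma INR_minus_half_neq0 (j m : nat) : INR j - 1/2 - INR m <> 0.
Proof. destruct (le_lt_dec j m) as [H|H]; apply le_INR in H; rewrite ?S_INR in H; lra. Qed.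

Lemma poch_pred_half (m n : nat) :
  poch (1/2 - INR m) n = poch (-1/2 - INR m) n * (INR n - 1/2 - INR m) / (-1/2 - INR m).
Proof.
  pose proof (poch_shift (-1/2 - INR m) n) as H.
  replace (-1/2 - INR m + 1) with (1/2 - INR m) in H by field.
  replace (INR n - 1/2 - INR m) with (-1/2 - INR m + INR n) by lra.
  rewrite H; pose proof (pos_INR m); field; lra.
Qed.

Lemma den_coef_succ_m (m n : nat) :
  den_coef m n * (-1/2 - INR m) = den_coef (S m) n * (INR n - 1/2 - INR m).
Proof.
  unfold den_coef; rewrite S_INR, poch_pred_half.
  replace (1/2 - (INR m + 1)) with (-1/2 - INR m) by field.
  pose proof (INR_fact_lt_0 n); pose proof (pos_INR m).
  field; lra.
Qed.

Lemma num_coef_succ_m (m j : nat) :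
  num_coef (S m) j = num_coef m j * (- (1/2 + INR m) * (3/2 + INR m))
                     / ((INR j - 1/2 - INR m) * (INR j + 3/2 + INR m)).
Proof.
  pose proof (poch_shift (3/2 + INR m) j) as H.
  replace (3/2 + INR m + 1) with (3/2 + INR (S m)) in H by (rewrite S_INR; ring).
  pose proof (poch_pos (3/2 + INR m) j ltac:(pose proof (pos_INR m); lra)).
  pose proof (pos_INR m); pose proof (pos_INR j); pose proof (INR_minus_half_neq0 j m).
  unfold num_coef; rewrite (poch_pred_half m j).
  replace (poch (3/2 + INR (S m)) j)
    with (poch (3/2 + INR m) j * (3/2 + INR m + INR j) / (3/2 + INR m))
    by (rewrite H; field; lra).
  rewrite S_INR; replace (1/2 - (INR m + 1)) with (-1/2 - INR m) by field.
  field; repeat split; lra.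
Qed.

Lemma den_term_succ_m (m : nat) (x : R) (n : nat) : -1 < x ->
  den_coef (S m) n * den_weight x n * (x + 3/2 + INR m)
  = (1 + x) * den_coef (S m) n + (1/2 + INR m) * (den_coef m n * den_weight x n).
Proof.
  intro Hx; pose proof (pos_INR n); pose proof (pos_INR m).
  replace (den_coef m n) with (den_coef (S m) n * (INR n - 1/2 - INR m) / (-1/2 - INR m))
    by (rewrite <- den_coef_succ_m; field; lra).
  unfold den_weight; field; lra.
Qed.

(** * The connection triangle *)

Definition conn (n j : nat) : R :=
  if (j <=? n)%nat
  then (2 * INR j + 1) * INR (fact n) ^ 2 / (INR (fact (n - j)) * INR (fact (n + j + 1)))
  else 0.

Lemma conn_eq0 (n j : nat) : (n < j)%nat -> conn n j = 0.
Proof. intro H; unfold conn; destruct (Nat.leb_spec j n); [lia | reflexivity]. Qed.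

Lemma conn_ge0 (n j : nat) : 0 <= conn n j.
Proof.
  unfold conn; destruct (Nat.leb_spec j n); [|lra].
  pose proof (INR_fact_lt_0 n); pose proof (INR_fact_lt_0 (n - j));
    pose proof (INR_fact_lt_0 (n + j + 1)); pose proof (pos_INR j).
  apply Rmult_le_pos; [apply Rmult_le_pos; [lra | apply pow_le; lra]|].
  apply Rlt_le, Rinv_0_lt_compat; nra.
Qed.

Lemma conn_0_0 : conn 0 0 = 1.
Proof. unfold conn; simpl; field. Qed.

Lemma conn_succ_col (n j : nat) : (j <= n)%nat ->
  conn n (S j) = conn n j * ((2 * INR j + 3) * (INR n - INR j))
                 / ((2 * INR j + 1) * (INR n + INR j + 2)).
Proof.
  intro Hj; pose proof (pos_INR j).
  destruct (Nat.eq_dec j n) as [<-|Hne].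
  { rewrite conn_eq0, Rminus_diag by lia; field; lra. }
  destruct (Nat.le_exists_sub (S j) n ltac:(lia)) as [k [-> _]].
  pose proof (INR_fact_lt_0 k); pose proof (INR_fact_lt_0 (k + S j + j + 1));
    pose proof (pos_INR k).
  unfold conn.
  rewrite (proj2 (Nat.leb_le (S j) (k + S j))), (proj2 (Nat.leb_le j (k + S j))) by lia.
  replace (k + S j - S j)%nat with k by lia.
  replace (k + S j - j)%nat with (S k) by lia.
  replace (k + S j + S j + 1)%nat with (S (k + S j + j + 1)) by lia.
  rewrite (fact_simpl k), (fact_simpl (k + S j + j + 1)), !mult_INR, !S_INR, !plus_INR, !S_INR,
    INR_0.
  field; repeat split; lra.
Qed.

Lemma conn_pred_row (n j : nat) : (j <= S n)%nat ->
  conn n j = conn (S n) j * ((INR n + 1 - INR j) * (INR n + INR j + 2)) / (INR n + 1) ^ 2.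
Proof.
  intro Hj; pose proof (pos_INR n).
  destruct (Nat.eq_dec j (S n)) as [->|Hne].
  { rewrite conn_eq0, S_INR by lia; field; lra. }
  destruct (Nat.le_exists_sub j n ltac:(lia)) as [k [-> _]].
  pose proof (INR_fact_lt_0 k); pose proof (INR_fact_lt_0 (k + j));
    pose proof (INR_fact_lt_0 (k + j + j + 1)); pose proof (pos_INR k); pose proof (pos_INR j).
  unfold conn.
  rewrite (proj2 (Nat.leb_le j (k + j))), (proj2 (Nat.leb_le j (S (k + j)))) by lia.
  replace (k + j - j)%nat with k by lia.
  replace (S (k + j) - j)%nat with (S k) by lia.
  replace (S (k + j) + j + 1)%nat with (S (k + j + j + 1)) by lia.
  rewrite (fact_simpl k), (fact_simpl (k + j + j + 1)), (fact_simpl (k + j)), !mult_INR,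
    !S_INR, !plus_INR, INR_1.
  field; repeat split; lra.
Qed.

Lemma row_sum_const_telescoping (F g : nat -> nat -> R) :
  (forall n j, (j <= S n)%nat -> F (S n) j - F n j = g n (S j) - g n j) ->
  (forall n, g n O = 0) -> (forall n, g n (S (S n)) = 0) -> (forall n, F n (S n) = 0) ->
  forall n, sum_f_R0 (F n) n = F O O.
Proof.
  intros Hstep Hg0 Hgend Hdiag n; induction n as [|n IH]; [reflexivity|].
  rewrite <- IH.
  assert (E : sum_f_R0 (F (S n)) (S n) - sum_f_R0 (F n) (S n) = 0).
  { rewrite <- minus_sum, (sum_eq _ (fun j => g n (S j) - g n j)) by (intros; apply Hstep; lia).
    rewrite sum_f_R0_telescope, Hgend, Hg0; ring. }
  rewrite (tech5 (F n) n), Hdiag in E; lra.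
Qed.

Lemma conn_row_sum (n : nat) : sum_f_R0 (conn n) n = 1.
Proof.
  rewrite <- conn_0_0.
  apply (row_sum_const_telescoping conn (fun n j =>
    - INR j ^ 2 * (INR n + INR j + 2) / ((2 * INR j + 1) * (INR n + 1) ^ 2) * conn (S n) j)).
  - intros k j Hj.
    rewrite (conn_pred_row k j Hj), (conn_succ_col (S k) j Hj), !S_INR.
    pose proof (pos_INR k); pose proof (pos_INR j).
    field; repeat split; lra.
  - intro k; simpl; field; pose proof (pos_INR k); lra.
  - intro k; rewrite (conn_eq0 (S k) (S (S k))) by lia; ring.
  - intro k; apply conn_eq0; lia.
Qed.

Lemma conn_expansion (x : R) (n : nat) : -1 <= x ->
  (INR n + 1 + x) * sum_f_R0 (fun j => conn n j * num_weight x j) n = 1 + x.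
Proof.
  intro Hx.
  rewrite scal_sum.
  replace (1 + x) with (conn 0 0 * num_weight x 0 * (INR 0 + 1 + x))
    by (rewrite conn_0_0, num_weight_0; simpl; ring).
  apply (row_sum_const_telescoping (fun n j => conn n j * num_weight x j * (INR n + 1 + x))
    (fun n j => - (x + 1 + INR j) * INR j ^ 2 * (INR n + INR j + 2)
                / ((2 * INR j + 1) * (INR n + 1) ^ 2) * conn (S n) j * num_weight x j)).
  - intros k j Hj.
    rewrite (conn_pred_row k j Hj), (conn_succ_col (S k) j Hj), num_weight_S, !S_INR by exact Hx.
    pose proof (pos_INR k); pose proof (pos_INR j).
    field; repeat split; lra.
  - intro k; simpl; field; pose proof (pos_INR k); lra.
  - intro k; rewrite (conn_eq0 (S k) (S (S k))) by lia; ring.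
  - intro k; rewrite conn_eq0 by lia; ring.
Qed.

Lemma alt_conn_row_sum (n : nat) : (0 < n)%nat -> sum_f_R0 (fun j => conn n j * (-1) ^ j) n = 0.
Proof.
  intro Hn; apply lt_INR in Hn; simpl INR in Hn.
  pose proof (conn_expansion (-1) n ltac:(lra)) as H.
  rewrite (sum_eq _ (fun j => conn n j * (-1) ^ j)) in H
    by (intros; rewrite num_weight_m1; reflexivity).
  apply (Rmult_eq_reg_l (INR n)); [|lra].
  replace (INR n + 1 + -1) with (INR n) in H by ring; rewrite H; ring.
Qed.

(** * Decay of the coefficients *)

Section Decay.

Variable m : nat.
Hypothesis m_pos : (1 <= m)%nat.

Let m_ge1 : 1 <= INR m.
Proof. rewrite <- INR_1; apply le_INR, m_pos. Qed.

Lemma den_coef_sq_bound :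
  exists C, forall n, (m <= n)%nat -> Rabs (den_coef m n) * INR n ^ 2 <= C.
Proof.
  exists (Rabs (den_coef m m) * INR m ^ 2).
  apply (nonincreasing_bound (fun n => Rabs (den_coef m n) * INR n ^ 2)).
  intros n Hn; apply le_INR in Hn; pose proof m_ge1.
  rewrite den_coef_S, S_INR.
  set (N := INR n) in *; set (M := INR m) in *.
  replace (den_coef m n * (N + 1/2 - M) * (N + 1/2) / (N + 1) ^ 2)
    with (den_coef m n * ((N + 1/2 - M) * (N + 1/2) / (N + 1) ^ 2)) by (field; lra).
  rewrite Rabs_mult, (Rabs_pos_eq (_ / _)) by (apply Rdiv_le_0_compat; [nra | apply pow_lt; lra]).
  replace (Rabs (den_coef m n) * ((N + 1/2 - M) * (N + 1/2) / (N + 1) ^ 2) * (N + 1) ^ 2)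
    with (Rabs (den_coef m n) * ((N + 1/2 - M) * (N + 1/2))) by (field; lra).
  apply Rmult_le_compat_l; [apply Rabs_pos | nra].
Qed.

Lemma ex_series_abs_den_coef : ex_series (fun n => Rabs (den_coef m n)).
Proof.
  destruct den_coef_sq_bound as [C HC]; pose proof m_ge1.
  apply (ex_series_incr_n _ m).
  apply (ex_series_le (fun k => Rabs (den_coef m (m + k))) (fun k => C * / (INR k + 1) ^ 2)).
  - intro k; change (norm (Rabs (den_coef m (m + k)))) with (Rabs (Rabs (den_coef m (m + k)))).
    rewrite Rabs_Rabsolu.
    pose proof (HC (m + k)%nat ltac:(lia)) as HCk; rewrite plus_INR in HCk.
    pose proof (pos_INR k); pose proof (Rabs_pos (den_coef m (m + k))).
    assert (0 <= C)
      by (eapply Rle_trans; [|exact HCk]; apply Rmult_le_pos; [lra | apply pow2_ge_0]).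
    apply Rle_trans with (C / (INR m + INR k) ^ 2).
    + apply (Rmult_le_reg_r ((INR m + INR k) ^ 2)); [nra|].
      unfold Rdiv; rewrite Rmult_assoc, Rinv_l, Rmult_1_r by nra; exact HCk.
    + apply Rmult_le_compat_l; [lra|].
      apply Rinv_le_contravar; [nra | apply pow_incr; lra].
  - exact (ex_series_scal_l C _ ex_series_inv_sq).
Qed.

Lemma is_lim_seq_INR_den_coef : is_lim_seq (fun n => INR n * den_coef m n) 0.
Proof.
  destruct den_coef_sq_bound as [C HC].
  apply (is_lim_seq_0_of_inv_bound _ (2 * C) m); intros n Hn.
  pose proof (HC n Hn) as HCn; apply le_INR in Hn; pose proof m_ge1.
  set (N := INR n) in *; pose proof (Rabs_pos (den_coef m n)).
  rewrite Rabs_mult, (Rabs_pos_eq N) by lra.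
  apply (Rmult_le_reg_r (N * (N + 1))); [nra|].
  replace (2 * C / (N + 1) * (N * (N + 1))) with (2 * C * N) by (field; lra).
  assert (Rabs (den_coef m n) * N ^ 2 * (N + 1) <= C * (N + 1))
    by (apply Rmult_le_compat_r; lra).
  assert (0 <= C) by (eapply Rle_trans; [|exact HCn]; apply Rmult_le_pos; [lra | apply pow2_ge_0]).
  assert (0 <= C * (N - 1)) by (apply Rmult_le_pos; lra).
  nra.
Qed.

Lemma num_coef_bound :
  exists C, forall j, (m <= j)%nat -> INR j * (INR j + 1) * Rabs (num_coef m j) <= C.
Proof.
  exists (INR m * (INR m + 1) * Rabs (num_coef m m)).
  apply (nonincreasing_bound (fun j => INR j * (INR j + 1) * Rabs (num_coef m j))).
  intros j Hj; apply le_INR in Hj; pose proof m_ge1.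
  rewrite num_coef_S, S_INR.
  set (J := INR j) in *; set (M := INR m) in *.
  replace (num_coef m j * (J + 1/2 - M) / (J + 3/2 + M))
    with (num_coef m j * ((J + 1/2 - M) / (J + 3/2 + M))) by (field; lra).
  rewrite Rabs_mult, (Rabs_pos_eq (_ / _)) by (apply Rdiv_le_0_compat; lra).
  replace ((J + 1) * (J + 1 + 1) * (Rabs (num_coef m j) * ((J + 1/2 - M) / (J + 3/2 + M))))
    with (Rabs (num_coef m j) * ((J + 1) * (J + 2) * (J + 1/2 - M) / (J + 3/2 + M)))
    by (field; lra).
  rewrite (Rmult_comm (J * (J + 1))).
  apply Rmult_le_compat_l; [apply Rabs_pos|].
  apply (Rmult_le_reg_r (J + 3/2 + M)); [lra|].
  field_simplify; [nra | lra].
Qed.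

Lemma is_lim_seq_INR_num_coef : is_lim_seq (fun j => INR j * num_coef m j) 0.
Proof.
  destruct num_coef_bound as [C HC].
  apply (is_lim_seq_0_of_inv_bound _ C m); intros j Hj.
  pose proof (HC j Hj) as HCj; pose proof (pos_INR j); pose proof (Rabs_pos (num_coef m j)).
  rewrite Rabs_mult, (Rabs_pos_eq (INR j)) by lra.
  apply (Rmult_le_reg_r (INR j + 1)); [lra|].
  replace (C / (INR j + 1) * (INR j + 1)) with C by (field; lra); lra.
Qed.

End Decay.

Lemma is_lim_seq_num_coef (m : nat) : is_lim_seq (num_coef m) 0.
Proof.
  destruct m as [|m].
  - apply (is_lim_seq_0_of_inv_bound _ 1 0); intros j _; pose proof (pos_INR j).
    rewrite num_coef_0_eq, Rabs_pos_eq by (apply Rlt_le, Rinv_0_lt_compat; lra).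
    unfold Rdiv; rewrite Rmult_1_l; apply Rinv_le_contravar; lra.
  - destruct (num_coef_bound (S m) ltac:(lia)) as [C HC].
    apply (is_lim_seq_0_of_inv_bound _ C (S m)); intros j Hj.
    pose proof (HC j Hj) as HCj; pose proof (Rabs_pos (num_coef (S m) j)).
    apply le_INR in Hj; rewrite S_INR in Hj; pose proof (pos_INR m).
    apply (Rmult_le_reg_r (INR j + 1)); [lra|].
    replace (C / (INR j + 1) * (INR j + 1)) with C by (field; lra).
    assert (0 <= (INR j - 1) * ((INR j + 1) * Rabs (num_coef (S m) j)))
      by (apply Rmult_le_pos; [lra | apply Rmult_le_pos; lra]).
    lra.
Qed.

(** * Column sums of the triangle *)

Definition col (m j : nat) : R := Series (fun n => den_coef m n * conn n j).

Lemma is_series_col (m j : nat) : (1 <= m)%nat ->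
  is_series (fun n => den_coef m n * conn n j) (col m j).
Proof.
  intro Hm; apply Series_correct.
  exact (ex_series_column (den_coef m) conn (ex_series_abs_den_coef m Hm)
           conn_ge0 conn_eq0 conn_row_sum j).
Qed.

Definition col_cert (m j n : nat) : R :=
  - 4 * (INR j + 1) * (INR n - INR j) / (2 * INR j + 1) * den_coef m n * conn n j.

Lemma col_cert_step (m j n : nat) :
  (3/2 + INR m + INR j) * (den_coef m n * conn n (S j))
  - (1/2 - INR m + INR j) * (den_coef m n * conn n j)
  = col_cert m j (S n) - col_cert m j n.
Proof.
  unfold col_cert; pose proof (pos_INR j); pose proof (pos_INR n).
  destruct (le_lt_dec j n) as [Hjn | Hnj].
  - rewrite (conn_succ_col n j Hjn), (conn_pred_row n j ltac:(lia)), den_coef_S, !S_INR.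
    apply le_INR in Hjn.
    field; repeat split; lra.
  - rewrite (conn_eq0 n j Hnj), (conn_eq0 n (S j)) by lia.
    destruct (Nat.eq_dec (S n) j) as [<-|Hne].
    + rewrite Rminus_diag; unfold Rdiv; ring.
    + rewrite (conn_eq0 (S n) j) by lia; unfold Rdiv; ring.
Qed.

Lemma is_lim_seq_col_cert (m j : nat) : (1 <= m)%nat -> is_lim_seq (col_cert m j) 0.
Proof.
  intro Hm.
  set (K := - 4 * (INR j + 1) / (2 * INR j + 1)).
  assert (Hden : is_lim_seq (den_coef m) 0)
    by apply ex_series_lim_0, ex_series_Rabs, ex_series_abs_den_coef, Hm.
  apply is_lim_seq_abs_0.
  apply (is_lim_seq_le_le (fun _ => 0) _
           (fun n => Rabs K * Rabs (INR n * den_coef m n - INR j * den_coef m n))).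
  - intro n; split; [apply Rabs_pos|].
    replace (col_cert m j n) with (K * (INR n * den_coef m n - INR j * den_coef m n) * conn n j)
      by (unfold col_cert, K; field; pose proof (pos_INR j); lra).
    rewrite !Rabs_mult, (Rabs_pos_eq (conn n j)) by apply conn_ge0.
    pose proof (entry_le1 conn conn_ge0 conn_eq0 conn_row_sum n j).
    assert (0 <= Rabs K * Rabs (INR n * den_coef m n - INR j * den_coef m n))
      by (apply Rmult_le_pos; apply Rabs_pos).
    nra.
  - apply is_lim_seq_const.
  - replace (Finite 0) with (Rbar_mult (Rabs K) (Rbar_abs (0 - INR j * 0)))
      by (simpl; f_equal; rewrite Rmult_0_r, Rminus_0_r, Rabs_R0; ring).
    apply is_lim_seq_scal_l, is_lim_seq_abs, is_lim_seq_minus'.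
    + exact (is_lim_seq_INR_den_coef m Hm).
    + exact (is_lim_seq_scal_l _ (INR j) 0 Hden).
Qed.

Lemma col_succ (m j : nat) : (1 <= m)%nat ->
  (3/2 + INR m + INR j) * col m (S j) = (1/2 - INR m + INR j) * col m j.
Proof.
  intro Hm.
  assert (Hcert0 : col_cert m j O = 0).
  { unfold col_cert; destruct j as [|j]; [rewrite Rminus_diag | rewrite conn_eq0 by lia];
      unfold Rdiv; ring. }
  set (k1 := 3/2 + INR m + INR j); set (k2 := 1/2 - INR m + INR j).
  assert (Hzero : is_series (fun n => k1 * (den_coef m n * conn n (S j))
                                      - k2 * (den_coef m n * conn n j)) (0 - col_cert m j O)).
  { apply is_series_telescope; [intro n; apply col_cert_step|].
    now apply is_lim_seq_col_cert. }
  assert (Hlin : is_series (fun n => k1 * (den_coef m n * conn n (S j))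
                                     - k2 * (den_coef m n * conn n j))
                   (k1 * col m (S j) - k2 * col m j)).
  { apply (is_series_minus (fun n => k1 * (den_coef m n * conn n (S j)))
                           (fun n => k2 * (den_coef m n * conn n j)));
      apply (is_series_scal_l _ (fun n => den_coef m n * conn n _)), is_series_col, Hm. }
  apply is_series_unique in Hzero; apply is_series_unique in Hlin; lra.
Qed.

Lemma col_eq (m j : nat) : (1 <= m)%nat -> col m j = col m 0 * num_coef m j.
Proof.
  intro Hm; induction j as [|j IH]; [rewrite num_coef_0; ring|].
  pose proof (col_succ m j Hm); pose proof (pos_INR j); pose proof (pos_INR m).
  apply (Rmult_eq_reg_l (3/2 + INR m + INR j)); [|lra].
  rewrite num_coef_S, H, IH; field; lra.
Qed.

(** * Alternating sums of the numerator coefficients *)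

Definition kappa (m : nat) : R := PI * Binomial.C (2 * m) m * (2 * INR m + 1) / 4 ^ (m + 1).

Lemma kappa_0 : kappa 0 = PI / 4.
Proof. unfold kappa, Binomial.C; simpl; field. Qed.

Lemma kappa_S (m : nat) : kappa (S m) = kappa m * (2 * INR m + 3) / (2 * (INR m + 1)).
Proof.
  unfold kappa, Binomial.C.
  replace (2 * S m - S m)%nat with (S m) by lia.
  replace (2 * m - m)%nat with m by lia.
  replace (2 * S m)%nat with (S (S (2 * m))) by lia.
  replace (S m + 1)%nat with (S (m + 1)) by lia.
  rewrite (fact_simpl (S (2 * m))), (fact_simpl (2 * m)), (fact_simpl m), !mult_INR, !S_INR,
    mult_INR; simpl pow; rewrite INR_IZR_INZ; simpl IZR.
  pose proof (INR_fact_lt_0 (2 * m)); pose proof (INR_fact_lt_0 m); pose proof (pos_INR m).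
  assert (0 < 4 ^ (m + 1)) by (apply pow_lt; lra).
  field; repeat split; lra.
Qed.

Lemma kappa_pos (m : nat) : 0 < kappa m.
Proof.
  induction m as [|m IH]; [rewrite kappa_0; pose proof PI_RGT_0; lra|].
  rewrite kappa_S; pose proof (pos_INR m).
  apply Rdiv_lt_0_compat; [apply Rmult_lt_0_compat|]; lra.
Qed.

Lemma is_series_alt_num_coef_0 : is_series (fun j => (-1) ^ j * num_coef 0 j) (PI / 4).
Proof.
  pose proof Alt_PI_eq as H; unfold Alt_PI in H; destruct exist_PI as [l Hl].
  replace (PI / 4) with l by lra.
  apply is_series_sum_f_R0, is_lim_seq_Reals.
  eapply Un_cv_ext; [|exact Hl]; intro N; apply sum_eq; intros j _.
  unfold tg_alt, PI_tg; rewrite num_coef_0_eq, plus_INR, mult_INR; simpl INR.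
  f_equal; f_equal; ring.
Qed.

Lemma is_series_alt_num_coef (m : nat) : is_series (fun j => (-1) ^ j * num_coef m j) (kappa m).
Proof.
  induction m as [|m IH]; [rewrite kappa_0; exact is_series_alt_num_coef_0|].
  set (rho := (2 * INR m + 3) / (2 * (INR m + 1))).
  set (g := fun j => rho * ((-1) ^ j * num_coef m j) * INR j / (2 * (INR j - 1/2 - INR m))).
  replace (kappa (S m)) with (rho * kappa m - g O)
    by (unfold g, rho; rewrite kappa_S; simpl INR; pose proof (pos_INR m); field; lra).
  apply (is_series_scal_telescope _ (fun j => (-1) ^ j * num_coef m j) g); [| exact IH |].
  - intro j; unfold g, rho.
    pose proof (INR_minus_half_neq0 j m); pose proof (INR_minus_half_neq0 (S j) m).
    rewrite S_INR in *; pose proof (pos_INR j); pose proof (pos_INR m).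
    rewrite num_coef_succ_m, num_coef_S; simpl pow.
    field; repeat split; lra.
  - apply is_lim_seq_abs_0.
    apply (is_lim_seq_le_le_loc (fun _ => 0) _ (fun j => rho * Rabs (num_coef m j))).
    + exists (2 * m + 1)%nat; intros j Hj; split; [apply Rabs_pos|].
      apply le_INR in Hj; rewrite plus_INR, mult_INR in Hj; simpl INR in Hj.
      pose proof (pos_INR m).
      assert (Hrho : 0 < rho) by (unfold rho; apply Rdiv_lt_0_compat; lra).
      replace (g j) with ((-1) ^ j * (rho * num_coef m j) * (INR j / (2 * (INR j - 1/2 - INR m))))
        by (unfold g; field; lra).
      assert (0 <= INR j / (2 * (INR j - 1/2 - INR m)) <= 1)
        by (split; [apply Rdiv_le_0_compat | apply Rle_div_l]; lra).
      rewrite !Rabs_mult, pow_1_abs, (Rabs_pos_eq rho), (Rabs_pos_eq (_ / _)) by lra.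
      assert (0 <= rho * Rabs (num_coef m j)) by (apply Rmult_le_pos; [lra | apply Rabs_pos]).
      nra.
    + apply is_lim_seq_const.
    + replace (Finite 0) with (Rbar_mult rho (Rbar_abs 0))
        by (simpl; rewrite Rabs_R0; f_equal; ring).
      apply is_lim_seq_scal_l, is_lim_seq_abs, is_lim_seq_num_coef.
Qed.

Lemma is_series_num_coef (m : nat) : (1 <= m)%nat ->
  is_series (num_coef m) ((1/2 + INR m) / (2 * INR m)).
Proof.
  intro Hm; assert (HM : 1 <= INR m) by (rewrite <- INR_1; apply le_INR, Hm).
  set (g := fun j => - (num_coef m j * (INR j + 1/2 + INR m)) / (2 * INR m)).
  replace ((1/2 + INR m) / (2 * INR m)) with (0 - g O)
    by (unfold g; rewrite num_coef_0; simpl INR; field; lra).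
  apply is_series_telescope.
  - intro j; unfold g; rewrite num_coef_S, S_INR; pose proof (pos_INR j).
    field; lra.
  - replace (Finite 0) with (Rbar_mult (- / (2 * INR m)) (0 + (1/2 + INR m) * 0))
      by (simpl; f_equal; ring).
    apply (is_lim_seq_ext (fun j => - / (2 * INR m)
                                    * (INR j * num_coef m j + (1/2 + INR m) * num_coef m j))).
    { intro j; unfold g; field; lra. }
    apply is_lim_seq_scal_l, is_lim_seq_plus'.
    + exact (is_lim_seq_INR_num_coef m Hm).
    + exact (is_lim_seq_scal_l _ _ 0 (is_lim_seq_num_coef m)).
Qed.

(** * The two series are proportional *)

Section Transfer.

Variable m : nat.
Hypothesis m_pos : (1 <= m)%nat.

Lemma series_transfer_col (w : nat -> R) : (forall j, Rabs (w j) <= 1) -> exists S : R,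
  is_series (fun n => den_coef m n * sum_f_R0 (fun j => conn n j * w j) n) S /\
  is_series (fun j => col m 0 * (num_coef m j * w j)) S.
Proof.
  intro Hw.
  destruct (series_interchange (den_coef m) conn (ex_series_abs_den_coef m m_pos)
              conn_ge0 conn_eq0 conn_row_sum w Hw) as [S [Hden Hnum]].
  exists S; split; [exact Hden|].
  revert Hnum; apply is_series_ext; intro j; simpl.
  change (Series (fun n => den_coef m n * conn n j)) with (col m j).
  rewrite col_eq by exact m_pos; ring.
Qed.

Lemma col_0_kappa : col m 0 * kappa m = 1.
Proof.
  destruct (series_transfer_col (fun j => (-1) ^ j) (fun j => Req_le _ _ (pow_1_abs j)))
    as [S [Hden Hnum]].
  assert (HS : S = 1).
  { apply is_series_unique in Hden; rewrite <- Hden.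
    apply is_series_unique, is_series_sum_f_R0.
    apply (is_lim_seq_ext (fun _ => 1)); [|apply is_lim_seq_const].
    intro N; rewrite (sum_f_R0_trunc _ 0 N); [simpl; rewrite den_coef_0, conn_0_0; ring | | lia].
    intros k Hk; cbv beta; rewrite alt_conn_row_sum by exact Hk; ring. }
  subst S; apply is_series_unique in Hnum; rewrite <- Hnum.
  symmetry; apply is_series_unique, (is_series_ext (fun j => col m 0 * ((-1) ^ j * num_coef m j))).
  - intro j; simpl; ring.
  - apply (is_series_scal_l _ (fun j => (-1) ^ j * num_coef m j)), is_series_alt_num_coef.
Qed.

Lemma series_transfer (w : nat -> R) : (forall j, Rabs (w j) <= 1) -> exists S : R,
  is_series (fun n => den_coef m n * sum_f_R0 (fun j => conn n j * w j) n) S /\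
  is_series (fun j => num_coef m j * w j) (kappa m * S).
Proof.
  intro Hw; destruct (series_transfer_col w Hw) as [S [Hden Hnum]].
  exists S; split; [exact Hden|].
  apply (is_series_scal_l (kappa m)) in Hnum; revert Hnum; apply is_series_ext; intro j; simpl.
  rewrite <- Rmult_assoc, (Rmult_comm (kappa m)), col_0_kappa; ring.
Qed.

End Transfer.

Lemma is_series_den_coef (m : nat) : (1 <= m)%nat ->
  is_series (den_coef m) ((1/2 + INR m) / (2 * INR m) / kappa m).
Proof.
  intro Hm; pose proof (kappa_pos m).
  destruct (series_transfer m Hm (fun _ => 1) (fun _ => Req_le _ _ Rabs_R1)) as [S [Hden Hnum]].
  replace ((1/2 + INR m) / (2 * INR m) / kappa m) with S.
  - revert Hden; apply is_series_ext; intro n; simpl.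
    rewrite (sum_eq _ (conn n)), conn_row_sum by (intros; ring); ring.
  - apply is_series_unique in Hnum.
    rewrite <- (is_series_unique _ _ (is_series_num_coef m Hm)).
    rewrite (Series_ext _ (fun j => num_coef m j * 1)), Hnum by (intro; ring).
    field; lra.
Qed.

Lemma hypergeometric_ratio_ge1 (m : nat) (x : R) : (1 <= m)%nat -> -1 < x -> exists S : R,
  is_series (fun n => den_coef m n * den_weight x n) S /\
  is_series (fun j => num_coef m j * num_weight x j) (kappa m * S).
Proof.
  intros Hm Hx.
  destruct (series_transfer m Hm (num_weight x) (fun j => num_weight_bound x j ltac:(lra)))
    as [S [Hden Hnum]].
  exists S; split; [|exact Hnum].
  revert Hden; apply is_series_ext; intro n; simpl; f_equal.
  pose proof (conn_expansion x n ltac:(lra)) as H; pose proof (pos_INR n).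
  unfold den_weight; apply (Rmult_eq_reg_l (INR n + 1 + x)); [rewrite H; field|]; lra.
Qed.

Lemma is_series_den_pred (m : nat) (x G V : R) : -1 < x ->
  is_series (den_coef (S m)) G ->
  is_series (fun n => den_coef (S m) n * den_weight x n) V ->
  is_series (fun n => den_coef m n * den_weight x n)
    (((x + 3/2 + INR m) * V - (1 + x) * G) / (1/2 + INR m)).
Proof.
  intros Hx HG HV; pose proof (pos_INR m).
  apply (is_series_ext (fun n => / (1/2 + INR m) *
    (den_coef (S m) n * den_weight x n * (x + 3/2 + INR m) - (1 + x) * den_coef (S m) n))).
  { intro n; simpl; rewrite den_term_succ_m by exact Hx; field; lra. }
  replace (((x + 3/2 + INR m) * V - (1 + x) * G) / (1/2 + INR m))
    with (/ (1/2 + INR m) * (V * (x + 3/2 + INR m) - (1 + x) * G)) by (field; lra).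
  apply (is_series_scal_l _ (fun n => den_coef (S m) n * den_weight x n * (x + 3/2 + INR m)
                                      - (1 + x) * den_coef (S m) n)).
  apply (is_series_minus (fun n => den_coef (S m) n * den_weight x n * (x + 3/2 + INR m))
                         (fun n => (1 + x) * den_coef (S m) n)).
  - now apply is_series_scal_r.
  - now apply (is_series_scal_l _ (den_coef (S m))).
Qed.

Lemma den_series_pos (m : nat) (x V : R) : -1 < x ->
  is_series (fun n => den_coef m n * den_weight x n) V -> 0 < V.
Proof.
  intro Hx; revert V; induction m as [|m IH]; intros V HV.
  - assert (Hpos : forall n, 0 < den_coef 0 n * den_weight x n).
    { intro n; unfold den_coef, den_weight; simpl INR; rewrite Rminus_0_r.
      pose proof (poch_pos (1/2) n ltac:(lra)); pose proof (INR_fact_lt_0 n);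
        pose proof (pos_INR n).
      apply Rmult_lt_0_compat; apply Rdiv_lt_0_compat; try nra; apply pow_lt; lra. }
    exact (is_series_pos _ _ (fun n => Rlt_le _ _ (Hpos n)) (Hpos O) HV).
  - pose proof (is_series_den_coef (S m) ltac:(lia)) as HG.
    pose proof (IH _ (is_series_den_pred m x _ _ Hx HG HV)) as Hpred.
    set (G := (1/2 + INR (S m)) / (2 * INR (S m)) / kappa (S m)) in *.
    assert (0 < G).
    { unfold G; rewrite S_INR; pose proof (pos_INR m); pose proof (kappa_pos (S m)).
      apply Rdiv_lt_0_compat; [apply Rdiv_lt_0_compat|]; lra. }
    pose proof (pos_INR m).
    apply Rlt_div_r in Hpred; [|lra].
    nra.
Qed.

Lemma is_series_num_0_of_1 (x F : R) : -1 < x ->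
  is_series (fun j => num_coef 1 j * num_weight x j) F ->
  is_series (fun j => num_coef 0 j * num_weight x j) (2 * (2 * x + 3) / 3 * F - (1 + x)).
Proof.
  intros Hx HF.
  set (g := fun j => - ((INR j + x + 1) / ((2 * INR j - 1) * (2 * INR j + 1))) * num_weight x j).
  replace (1 + x) with (g O) by (unfold g; rewrite num_weight_0; simpl; field).
  apply (is_series_scal_telescope _ (fun j => num_coef 1 j * num_weight x j) g); [| exact HF |].
  - intro j; unfold g.
    pose proof (INR_minus_half_neq0 j 0); pose proof (INR_minus_half_neq0 (S j) 0).
    rewrite (num_coef_succ_m 0 j), num_coef_0_eq, num_weight_S, !S_INR in * by lra.
    simpl INR in *; pose proof (pos_INR j).
    field; repeat split; lra.
  - apply (is_lim_seq_0_of_inv_bound _ (x + 2) 1); intros j Hj.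
    apply le_INR in Hj; simpl INR in Hj.
    pose proof (num_weight_bound x j ltac:(lra)); pose proof (Rabs_pos (num_weight x j)).
    set (r := (INR j + x + 1) / ((2 * INR j - 1) * (2 * INR j + 1))).
    assert (0 <= r) by (apply Rdiv_le_0_compat; nra).
    assert (r <= (x + 2) / (INR j + 1)).
    { unfold r; apply (Rmult_le_reg_r ((2 * INR j - 1) * (2 * INR j + 1) * (INR j + 1))); [nra|].
      field_simplify; [|nra|nra].
      assert (0 <= (x + 1) * (INR j - 1) * (INR j + 1))
        by (apply Rmult_le_pos; [apply Rmult_le_pos|]; lra).
      nra. }
    unfold g; fold r; rewrite Rabs_mult, Rabs_Ropp, (Rabs_pos_eq r) by assumption.
    nra.
Qed.

Lemma hypergeometric_ratio (m : nat) (x : R) : -1 < x -> exists V : R,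
  is_series (fun n => den_coef m n * den_weight x n) V /\
  is_series (fun j => num_coef m j * num_weight x j) (kappa m * V).
Proof.
  intro Hx; destruct m as [|m]; [|apply hypergeometric_ratio_ge1; [lia | exact Hx]].
  destruct (hypergeometric_ratio_ge1 1 x (le_n 1) Hx) as [S1 [Hden1 Hnum1]].
  pose proof (is_series_den_pred 0 x _ _ Hx (is_series_den_coef 1 (le_n 1)) Hden1) as Hden0.
  pose proof (is_series_num_0_of_1 x _ Hx Hnum1) as Hnum0.
  set (G1 := (1/2 + INR 1) / (2 * INR 1) / kappa 1) in *.
  exists (((x + 3/2 + INR 0) * S1 - (1 + x) * G1) / (1/2 + INR 0)); split; [exact Hden0|].
  replace (kappa 0 * (((x + 3/2 + INR 0) * S1 - (1 + x) * G1) / (1/2 + INR 0)))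
    with (2 * (2 * x + 3) / 3 * (kappa 1 * S1) - (1 + x)); [exact Hnum0|].
  unfold G1; rewrite (kappa_S 0); simpl INR; pose proof (kappa_pos 0).
  field; lra.
Qed.

Theorem mainTheorem17 (m : nat) (eta : R) (heta : -1 < eta) :
  exists F1 F2 : R,
    is_pFq [1/2 - INR m; 1; - eta] [3/2 + INR m; 2 + eta] (-1) F1 /\
    is_pFq [1/2 - INR m; 1/2; 1 + eta] [1; 2 + eta] 1 F2 /\
    PI = 4 ^ (m + 1) / (Binomial.C (2 * m) m * (2 * INR m + 1)) * (F1 / F2).
Proof.
  destruct (hypergeometric_ratio m eta heta) as [V [Hden Hnum]].
  pose proof (den_series_pos m eta V heta Hden).
  exists (kappa m * V), V; split; [|split].
  - revert Hnum; apply is_series_ext; intro j; symmetry; apply hyp_term_num, heta.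
  - revert Hden; apply is_series_ext; intro n; symmetry; apply hyp_term_den, heta.
  - assert (0 < Binomial.C (2 * m) m).
    { unfold Binomial.C; pose proof (INR_fact_lt_0 (2 * m)); pose proof (INR_fact_lt_0 m);
        pose proof (INR_fact_lt_0 (2 * m - m)).
      apply Rdiv_lt_0_compat; nra. }
    assert (0 < 4 ^ (m + 1)) by (apply pow_lt; lra).
    unfold kappa; pose proof (pos_INR m).
    field; repeat split; lra.
Qed.
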